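(* Let $\alpha\colon\Gamma\curvearrowright X$ be an action of a countable group on a compact, Hausdorff, $0$-dimensional space. The natural semigroup homomorphism $\pi\colon T(\alpha)\to H(\alpha)$ is injective if and only if $T(\alpha)$ is cancellative.
   Context: Clopen type semigroup: let $Y = X\times\mathbb N$, and let $\tilde\Gamma=\Gamma\times\mathfrak S$ ($\mathfrak S$ the permutation group of $\mathbb N$) act on $Y$ by $(\gamma,\sigma)(x,n)=(\alpha(\gamma)x,\sigma(n))$. A clopen $A\subseteq Y$ is bounded if $A\cap(X\times\{n\})=\emptyset$ for all large $n$. Bounded clopen $A,B$ are equidecomposable if there are clopen $A_1,\dots,A_n$ and $\tilde\gamma_i\in\tilde\Gamma$ with $A=\bigsqcup_i A_i$, $B=\bigsqcup_i\tilde\gamma_iA_i$. $T(\alpha)$ is the set of classes $[A]$, with $[A]+[B]=[A'\sqcup B']$ for disjoint representatives. Cancellative: $a+b=a+c\Rightarrow b=c$. The $0$-homology group is $H(\alpha)=C(X,\mathbb Z)/\langle f-f\circ\alpha(\gamma): f\in C(X,\mathbb Z),\gamma\in\Gamma\rangle$. The map $\pi$ sends $[A]$, for a bounded clopen $A=\bigsqcup_i A_i\times\{i\}$, to the class in $H(\alpha)$ of $\sum_i \mathbf 1_{A_i}$ (this is a well-defined monoid homomorphism onto the image of $C(X,\mathbb N)$). *)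

From HB Require Import structures.
From mathcomp Require Import all_boot all_order all_algebra.
From mathcomp Require Import all_classical all_reals.
From mathcomp Require Import topology_structure product_topology separation_axioms
  discrete_topology nat_topology compact.
Set Implicit Arguments. Unset Strict Implicit. Unset Printing Implicit Defensive.
Import Order.TTheory GRing.Theory Num.Theory.
Local Open Scope classical_set_scope.
Local Open Scope ring_scope.

Definition is_group (G : Type) (mul : G -> G -> G) (one : G) (inv : G -> G) :=
  [/\ forall a b c, mul a (mul b c) = mul (mul a b) c,
      forall a, mul one a = a,
      forall a, mul a one = a,
      forall a, mul (inv a) a = one &
      forall a, mul a (inv a) = one].

Definition zero_dim (X : topologicalType) :=
  forall (U : set X) (x : X), open U -> U x ->
    exists V : set X, [/\ clopen V, V x & V `<=` U].

(* An action of the group G on X by homeomorphisms (continuous maps with the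
   action laws; each alpha g is then a homeomorphism with inverse alpha g^-1). *)
Definition is_action (X : topologicalType) (G : Type) (mul : G -> G -> G) (one : G)
  (alpha : G -> X -> X) :=
  [/\ forall g, continuous (alpha g),
      forall x, alpha one x = x &
      forall g h x, alpha (mul g h) x = alpha g (alpha h x)].

Section TypeSemigroup.
Context {X : topologicalType} {G : Type} (alpha : G -> X -> X).

Definition Y := (X * nat)%type.

Definition bounded_by (A : set Y) (N : nat) := forall x n, A (x, n) -> (n < N)%N.
Definition bounded (A : set Y) := exists N, bounded_by A N.
Definition bclopen (A : set Y) := clopen A /\ bounded A.

Definition act_tilde (g : G) (sigma : nat -> nat) (A : set Y) : set Y :=
  (fun p : Y => (alpha g p.1, sigma p.2)) @` A.

Definition equidec (A B : set Y) :=
  exists (n : nat) (P : 'I_n -> set Y) (g : 'I_n -> G) (sigma : 'I_n -> nat -> nat),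
    (forall i, clopen (P i)) /\
    (forall i, bijective (sigma i)) /\
    A = \bigcup_(i in [set: 'I_n]) P i /\
    (forall i j, i != j -> P i `&` P j = set0) /\
    B = \bigcup_(i in [set: 'I_n]) act_tilde (g i) (sigma i) (P i) /\
    (forall i j, i != j ->
       act_tilde (g i) (sigma i) (P i) `&` act_tilde (g j) (sigma j) (P j) = set0).

(* T(alpha) is cancellative: [A] + [B] = [A] + [C] implies [B] = [C], where the
   sums are computed with disjoint representatives. *)
Definition T_cancellative :=
  forall A B C A1 B1 A2 C2 : set Y,
    bclopen A -> bclopen B -> bclopen C ->
    bclopen A1 -> bclopen B1 -> bclopen A2 -> bclopen C2 ->
    equidec A A1 -> equidec B B1 -> A1 `&` B1 = set0 ->
    equidec A A2 -> equidec C C2 -> A2 `&` C2 = set0 ->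
    equidec (A1 `|` B1) (A2 `|` C2) ->
    equidec B C.

Definition contZ (f : X -> int) := continuous (f : X -> discrete_topology int).

Inductive coboundary : (X -> int) -> Prop :=
  | cob_gen (f : X -> int) (g : G) :
      contZ f -> coboundary (fun x => f x - f (alpha g x))
  | cob_zero : coboundary (fun _ => 0)
  | cob_add (f h : X -> int) :
      coboundary f -> coboundary h -> coboundary (fun x => f x + h x)
  | cob_opp (f : X -> int) : coboundary f -> coboundary (fun x => - f x).

Definition fiber_count (A : set Y) (N : nat) (x : X) : int :=
  \sum_(n < N) (nat_of_bool (`[< A (x, val n) >]))%:Z.

Definition pi_eq (A B : set Y) :=
  exists N, [/\ bounded_by A N, bounded_by B N &
    coboundary (fun x => fiber_count A N x - fiber_count B N x)].

Definition pi_injective :=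
  forall A B : set Y, bclopen A -> bclopen B -> pi_eq A B -> equidec A B.

End TypeSemigroup.

From HB Require Import structures.
From mathcomp Require Import all_boot all_order all_algebra.
From mathcomp Require Import all_classical all_reals.
From mathcomp Require Import topology_structure product_topology separation_axioms
  discrete_topology nat_topology compact.
From mathcomp Require Import zify ring.
From Stdlib Require List.
Set Implicit Arguments. Unset Strict Implicit. Unset Printing Implicit Defensive.
Import GRing.Theory.
Local Open Scope classical_set_scope.

(* pi[A] is the class of the fiber-size function x |-> #{n | (x, n) \in A}, and an
   equidecomposition changes this function by a coboundary; so if pi is injective,
   [A] + [B] = [A] + [C] gives pi[B] = pi[C] and then [B] = [C].
   Conversely, sets with the same fiber sizes are equidecomposable by permutations of
   N alone: over every x the r-th point of one fiber goes to the r-th point of the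
   other, and on clopen pieces this matching is a fixed transposition.  If
   pi[A] = pi[B], write the difference of the fiber sizes as sum_i (f_i - f_i o alpha g_i)
   with f_i locally constant and N-valued, hence bounded by compactness.  Stacking
   stairs of heights f_i, resp. f_i o alpha g_i, above A and B gives equidecomposable
   sets S ~ S' with [S'] + [A] = [S] + [B], hence [S] + [A] = [S] + [B], and
   cancellation gives [A] = [B]. *)

Definition locally_constant {T : topologicalType} {V : Type} (f : T -> V) :=
  forall x, \forall y \near x, f y = f x.

Section LocallyConstant.
Context {T : topologicalType}.

Lemma locally_constant_cst {V : Type} (v : V) : locally_constant (fun _ : T => v).
Proof. by move=> x; apply: filterE. Qed.

Lemma locally_constant_comp {V W : Type} (h : V -> W) (f : T -> V) :
  locally_constant f -> locally_constant (h \o f).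
Proof. by move=> lf x; apply: filterS (lf x) => y /= ->. Qed.

Lemma locally_constant2 {U V W : Type} (op : U -> V -> W) (f : T -> U) (g : T -> V) :
  locally_constant f -> locally_constant g ->
  locally_constant (fun x => op (f x) (g x)).
Proof.
by move=> lf lg x; apply: filterS2 (lf x) (lg x) => y /= -> ->.
Qed.

Lemma locally_constant_continuous_comp {S : topologicalType} {V : Type}
    (phi : T -> S) (f : S -> V) :
  continuous phi -> locally_constant f -> locally_constant (f \o phi).
Proof. by move=> cphi lf x; exact: cphi x _ (lf (phi x)). Qed.

Lemma locally_constant_fin_family {I : finType} {V : Type} (h : T -> I -> V) :
  (forall i, locally_constant (h^~ i)) -> locally_constant h.
Proof.
move=> lh x; have : \forall y \near x, forall i, h y i = h x i.
  by apply: filter_forall => i; exact: lh.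
by apply: filterS => y /= hy; exact: funext.
Qed.

Lemma clopen_locally_constantP (U : set T) :
  clopen U <-> locally_constant (fun x => `[< U x >]).
Proof.
split=> [[oU cU] x|lU].
  have [Ux|nUx] := pselect (U x).
    by apply: filterS (open_nbhs_nbhs (conj oU Ux)) => y Uy; rewrite !asboolT.
  have oCU : open (~` U) by exact: closed_openC.
  by apply: filterS (open_nbhs_nbhs (conj oCU nUx)) => y nUy; rewrite !asboolF.
have nbhs_iff x : \forall y \near x, U y <-> U x.
  by apply: filterS (lU x) => y e; exact: asbool_eq_equiv e.
split.
  rewrite openE => x Ux.
  by apply: filterS (nbhs_iff x) => y [_]; apply.
rewrite -[U]setCK; apply: open_closedC; rewrite openE => x nUx.
by apply: filterS (nbhs_iff x) => y [Uyx _] /Uyx.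
Qed.

End LocallyConstant.

Lemma contZ_locally_constantP (X : topologicalType) (f : X -> int) :
  contZ f <-> locally_constant f.
Proof.
split=> H x; first by move/(@discrete_cvg (discrete_topology int)): (H x).
by apply/(@discrete_cvg (discrete_topology int)); exact: H x.
Qed.

Lemma locally_constant_pairP {X : topologicalType} {V : Type} (f : X * nat -> V) :
  locally_constant f <-> forall n, locally_constant (fun x => f (x, n)).
Proof.
split=> [lf n x|lf [x n]].
  have [[U W] /= [Ux Wn] UW] := lf (x, n).
  by apply: filterS Ux => y Uy; apply: (UW (y, n)); split=> //; exact: nbhs_singleton.
exists ([set y | f (y, n) = f (x, n)], [set n]) => /=; last by move=> [y m] /= [? ->].
by split; [exact: lf | exact: discrete_set1].
Qed.

Lemma clopen_sliceP {X : topologicalType} (A : set (X * nat)) :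
  clopen A <-> forall n, locally_constant (fun x => `[< A (x, n) >]).
Proof. by rewrite clopen_locally_constantP locally_constant_pairP. Qed.

Lemma compact_locally_constant_bounded {X : topologicalType} (p : X -> nat) :
  compact [set: X] -> locally_constant p -> exists M, forall x, (p x <= M)%N.
Proof.
move=> /compact_near_coveringP cX lp.
have : \forall M \near \oo, [set: X] `<=` (fun x => (p x <= M)%N).
  apply: cX => x _; exists ([set y | p y = p x], [set M | (p x <= M)%N]) => /=.
    by split; [exact: lp | exists (p x)].
  by move=> [y M] /= [-> ->].
by move=> [M _ HM]; exists M => x; exact: HM M (leqnn M) x I.
Qed.

Lemma Forall_locally_constant_bounded {X : topologicalType} {I : Type}
    (F : I -> X -> nat) (L : seq I) :
  compact [set: X] -> List.Forall (fun i => locally_constant (F i)) L ->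
  exists M, List.Forall (fun i => forall x, (F i x <= M)%N) L.
Proof.
move=> cX; elim=> [|i {}L lFi _ [M LM]]; first by exists 0%N.
have [Mi iM] := compact_locally_constant_bounded cX lFi.
exists (maxn Mi M); constructor; first by move=> x; rewrite leq_max iM.
by apply: List.Forall_impl LM => j jM x; rewrite leq_max jM orbT.
Qed.

Lemma bigcup_enum_val {T : Type} {I : finType} (F : I -> set T) :
  \bigcup_(i in [set: 'I_#|I|]) F (enum_val i) = \bigcup_(i in [set: I]) F i.
Proof.
apply/seteqP; split=> [p [i _ Fp]|p [i _ Fp]]; first by exists (enum_val i).
by exists (enum_rank i) => //; rewrite enum_rankK.
Qed.

Definition swapn (a b n : nat) : nat := if n == a then b else if n == b then a else n.

Lemma swapnK a b : involutive (swapn a b).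
Proof.
move=> n; rewrite /swapn; case: (eqVneq n a) => [->|na]; first by rewrite eqxx; case: eqVneq.
by case: (eqVneq n b) => [->|nb]; rewrite ?eqxx // (negbTE na) (negbTE nb).
Qed.

Lemma swapnL a b : swapn a b a = b. Proof. by rewrite /swapn eqxx. Qed.

Section FiberSize.
Context {X : topologicalType}.
Implicit Types (A B : set (X * nat)) (x : X).

Definition fiber_size A (N : nat) x : nat := \sum_(n < N) `[< A (x, val n) >].

Lemma bounded_by_leq A N K : bounded_by A N -> (N <= K)%N -> bounded_by A K.
Proof. by move=> bA NK x n /bA /leq_trans; apply. Qed.

Lemma bounded_by_setU A B N : bounded_by A N -> bounded_by B N -> bounded_by (A `|` B) N.
Proof. by move=> bA bB x n [/bA|/bB]. Qed.

Lemma fiber_countE A N x : fiber_count A N x = Posz (fiber_size A N x).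
Proof. by rewrite /fiber_count /fiber_size (big_morph Posz PoszD (erefl (Posz 0))). Qed.

Lemma fiber_sizeS A N x :
  fiber_size A N.+1 x = (fiber_size A N x + `[< A (x, N) >])%N.
Proof. by rewrite /fiber_size big_ord_recr. Qed.

Lemma fiber_size_card A N x :
  fiber_size A N x = #|[set n : 'I_N | `[< A (x, val n) >]]%SET|.
Proof.
rewrite /fiber_size -sum1dep_card [RHS]big_mkcond /=.
by apply: eq_bigr => n _; case: (`[< _ >]).
Qed.

Lemma leq_fiber_size A N K x : (N <= K)%N -> (fiber_size A N x <= fiber_size A K x)%N.
Proof. by move=> NK; rewrite /fiber_size -(subnKC NK) big_split_ord leq_addr. Qed.

Lemma fiber_size_widen A N K x : bounded_by A N -> (N <= K)%N ->
  fiber_size A K x = fiber_size A N x.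
Proof.
move=> bA NK; rewrite /fiber_size -(subnKC NK) big_split_ord /= addnC big1 ?add0n //.
by move=> n _; rewrite asboolF // => /bA /=; rewrite ltnNge leq_addr.
Qed.

Lemma fiber_size_lt A x m n : A (x, m) -> (m < n)%N ->
  (fiber_size A m x < fiber_size A n x)%N.
Proof.
move=> Axm mn; apply: leq_trans (leq_fiber_size A x mn).
by rewrite fiber_sizeS asboolT // addn1.
Qed.

Lemma fiber_size_inj A x m n : A (x, m) -> A (x, n) ->
  fiber_size A m x = fiber_size A n x -> m = n.
Proof.
move=> Axm Axn e; case: (ltngtP m n) => // [mn|nm].
  by have := fiber_size_lt Axm mn; rewrite e ltnn.
by have := fiber_size_lt Axn nm; rewrite e ltnn.
Qed.

Lemma fiber_size_rank A N x r : (r < fiber_size A N x)%N ->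
  exists m, [/\ (m < N)%N, A (x, m) & fiber_size A m x = r].
Proof.
elim: N => [|N IH]; first by rewrite /fiber_size big_ord0.
rewrite fiber_sizeS; have := leq_b1 `[< A (x, N) >].
case: (ltngtP r (fiber_size A N x)) => [rN|Nr|->] b1 rS.
- by have [m [mN Axm <-]] := IH rN; exists m; split=> //; exact: ltnW.
- lia.
- have [AxN|nAxN] := pselect (A (x, N)); first by exists N.
  by move: rS; rewrite asboolF // addn0 ltnn.
Qed.

Lemma fiber_size_setU A B N x : A `&` B = set0 ->
  fiber_size (A `|` B) N x = (fiber_size A N x + fiber_size B N x)%N.
Proof.
move=> AB0; rewrite /fiber_size -big_split; apply: eq_bigr => n _ /=.
have [Axn|nAxn] := pselect (A (x, val n)).
  have nBxn : ~ B (x, val n).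
    by move=> Bxn; have : (A `&` B) (x, val n) by []; rewrite AB0.
  by rewrite (asboolT Axn) (asboolF nBxn) asboolT //; left.
rewrite (asboolF nAxn) add0n; have [Bxn|nBxn] := pselect (B (x, val n)).
  by rewrite !asboolT //; right.
by rewrite !asboolF // => -[].
Qed.

Lemma fiber_size_bigcup (I : finType) (P : I -> set (X * nat)) A N x :
  A = \bigcup_(i in [set: I]) P i -> (forall i j, i != j -> P i `&` P j = set0) ->
  fiber_size A N x = (\sum_i fiber_size (P i) N x)%N.
Proof.
move=> eA dP; rewrite /fiber_size exchange_big; apply: eq_bigr => n _ /=.
have [Axn|nAxn] := pselect (A (x, val n)); last first.
  rewrite asboolF // big1 // => i _; rewrite asboolF // => Pi; apply: nAxn.
  by rewrite eA; exists i.
move: (Axn); rewrite {1}eA => -[i _ Pi].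
rewrite (bigD1 i) //= !asboolT // big1 // => j ji; rewrite asboolF // => Pj.
by have : (P i `&` P j) (x, val n) by []; rewrite dP // eq_sym.
Qed.

Lemma fiber_size_image A B N x y (s : nat -> nat) : injective s ->
  bounded_by A N -> bounded_by B N ->
  (forall m, B (x, m) <-> exists2 n, A (y, n) & s n = m) ->
  fiber_size B N x = fiber_size A N y.
Proof.
move=> s_inj bA bB eB; case: N bA bB => [|N] bA bB; first by rewrite /fiber_size !big_ord0.
have Bs n : A (y, n) -> B (x, s n) by move=> Ayn; apply/eB; exists n.
have ltNs n : A (y, n) -> (s n < N.+1)%N by move/Bs/bB.
rewrite !fiber_size_card.
have -> : [set m : 'I_N.+1 | `[< B (x, val m) >]]%SET =
          [set inord (s (val n)) | n in [set n : 'I_N.+1 | `[< A (y, val n) >]]]%SET.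
  apply/setP => m; rewrite inE; apply/asboolP/imsetP => [/eB [n Ayn snm]|[n]].
    exists (Ordinal (bA _ _ Ayn)); first by rewrite inE; apply/asboolP.
    by apply: ord_inj; rewrite /= snm inordK ?ltn_ord.
  by rewrite inE => /asboolP Ayn ->; rewrite /= inordK ?ltNs //; exact: Bs.
apply: card_in_imset => n n'; rewrite !inE => Ayn Ayn'.
move/(congr1 (@nat_of_ord _)).
by rewrite (inordK (ltNs _ Ayn)) (inordK (ltNs _ Ayn')) => /s_inj /val_inj.
Qed.

Lemma locally_constant_fiber_size A N : clopen A -> locally_constant (fiber_size A N).
Proof.
move=> /clopen_sliceP cA.
apply: (locally_constant_comp (fun h : 'I_N -> bool => \sum_(n < N) h n)).
by apply: locally_constant_fin_family => n; exact: cA.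
Qed.

End FiberSize.

Section Stairs.
Context {X : topologicalType}.

Definition stair (k : nat) (p : X -> nat) : set (X * nat) :=
  [set q | (k <= q.2 < k + p q.1)%N].

Fixpoint stack (k M : nat) (L : seq (X -> nat)) : set (X * nat) :=
  if L is p :: L' then stair k p `|` stack (k + M) M L' else set0.

Lemma fiber_size_stair k p K x :
  fiber_size (stair k p) K x = (minn K (k + p x) - k)%N.
Proof.
elim: K => [|K IH]; first by rewrite /fiber_size big_ord0 min0n.
rewrite fiber_sizeS IH; have [kK|kK] := boolP (k <= K < k + p x)%N.
  by rewrite asboolT //; move: kK => /andP[]; lia.
rewrite asboolF ?addn0; last exact/negP.
by move: kK; rewrite negb_and -!ltnNge => /orP[]; lia.
Qed.

Lemma clopen_stair k p : locally_constant p -> clopen (stair k p).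
Proof.
move=> lp; apply/clopen_sliceP => n.
exact: (locally_constant_comp (fun v => `[< (k <= n < k + v)%N >]) lp).
Qed.

Lemma stack_ge k M L x n : stack k M L (x, n) -> (k <= n)%N.
Proof.
elim: L k => [|p L IH] k //= [/andP[] //|/IH]; lia.
Qed.

Lemma stair_stack_disjoint k M p L : (forall x, (p x <= M)%N) ->
  stair k p `&` stack (k + M) M L = set0.
Proof.
move=> pM; apply/seteqP; split=> // -[x n] [/andP[_ /= nlt] /stack_ge].
by have := pM x; lia.
Qed.

Lemma stack_disjoint k M L B : bounded_by B k -> stack k M L `&` B = set0.
Proof. by move=> bB; apply/seteqP; split=> // -[x n] [/stack_ge kn /bB]; lia. Qed.

Lemma clopen_stack k M L : List.Forall locally_constant L -> clopen (stack k M L).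
Proof.
elim: L k => [k _|p L IH k /List.Forall_cons_iff [lp lL]]; first exact: clopen0.
by apply: clopenU; [exact: clopen_stair | exact: IH].
Qed.

Section BoundedHeights.
Variables (M : nat) (L : seq (X -> nat)).
Hypothesis L_bounded : List.Forall (fun p => forall x, (p x <= M)%N) L.

Lemma stack_bounded k : bounded_by (stack k M L) (k + size L * M).
Proof.
elim: L L_bounded k => [_ k x n []|p L' IH /List.Forall_cons_iff [pM L'M] k x n /=].
rewrite mulSn => -[/andP[_ /= nlt]|/(IH L'M) /=]; last lia.
by have := pM x; lia.
Qed.

Lemma fiber_size_stack k K x : (k + size L * M <= K)%N ->
  fiber_size (stack k M L) K x = (\sum_(p <- L) p x)%N.
Proof.
elim: L L_bounded k => [_ k _|p L' IH /List.Forall_cons_iff [pM L'M] k /=].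
  by rewrite big_nil /fiber_size big1 // => n _; rewrite asboolF.
rewrite mulSn big_cons => kK.
rewrite fiber_size_setU ?stair_stack_disjoint // fiber_size_stair IH //; last lia.
by have := pM x; lia.
Qed.

End BoundedHeights.

End Stairs.

Section Action.
Variables (G : Type) (mul : G -> G -> G) (one : G) (inv : G -> G)
  (X : topologicalType) (alpha : G -> X -> X).
Hypothesis group_G : is_group mul one inv.
Hypothesis action_alpha : is_action mul one alpha.

Local Notation equidec := (equidec alpha).
Local Notation act := (act_tilde alpha).

Lemma alpha1 x : alpha one x = x. Proof. by case: action_alpha. Qed.

Lemma continuous_alpha g : continuous (alpha g). Proof. by case: action_alpha. Qed.

Lemma alphaK g : cancel (alpha g) (alpha (inv g)).
Proof.
move=> x; have [_ _ alphaM] := action_alpha; have [_ _ _ mulVg _] := group_G.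
by rewrite -alphaM mulVg alpha1.
Qed.

Lemma alphaVK g : cancel (alpha (inv g)) (alpha g).
Proof.
move=> x; have [_ _ alphaM] := action_alpha; have [_ _ _ _ mulgV] := group_G.
by rewrite -alphaM mulgV alpha1.
Qed.

Lemma equidec_fin (I : finType) (P : I -> set (X * nat)) (g : I -> G)
    (s : I -> nat -> nat) (A B : set (X * nat)) :
  (forall i, clopen (P i)) -> (forall i, bijective (s i)) ->
  A = \bigcup_(i in [set: I]) P i -> (forall i j, i != j -> P i `&` P j = set0) ->
  B = \bigcup_(i in [set: I]) act (g i) (s i) (P i) ->
  (forall i j, i != j -> act (g i) (s i) (P i) `&` act (g j) (s j) (P j) = set0) ->
  equidec A B.
Proof.
move=> cP bs -> dP -> dQ.
exists #|I|, (P \o enum_val), (g \o enum_val), (s \o enum_val).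
have enum_val_neq (i j : 'I_#|I|) : i != j -> enum_val i != enum_val j :> I.
  by apply: contra => /eqP /enum_val_inj ->.
split=> //=; split=> //; split; first by rewrite bigcup_enum_val.
split; first by move=> i j /enum_val_neq; exact: dP.
split; first by rewrite (bigcup_enum_val (fun i => act (g i) (s i) (P i))).
by move=> i j /enum_val_neq; exact: dQ.
Qed.

Lemma equidec_act P g s : clopen P -> bijective s -> equidec P (act g s P).
Proof.
move=> cP bs; apply: (@equidec_fin unit (fun=> P) (fun=> g) (fun=> s)) => //;
  by apply/seteqP; split=> [p Pp|p [_ _ Pp]] //; exists tt.
Qed.

Lemma equidec_refl A : clopen A -> equidec A A.
Proof.
move=> cA; have {2}<- : act one id A = A.
  apply/seteqP; split=> [_ [[x n] An <-]|[x n] An]; first by rewrite /= alpha1.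
  by exists (x, n) => //=; rewrite alpha1.
by apply: equidec_act => //; exists id.
Qed.

Lemma equidec_setU A A' B B' : equidec A A' -> equidec B B' ->
  A `&` B = set0 -> A' `&` B' = set0 -> equidec (A `|` B) (A' `|` B').
Proof.
move=> [n1 [P1 [g1 [s1 [cP1 [bs1 [-> [dP1 [-> dQ1]]]]]]]]].
move=> [n2 [P2 [g2 [s2 [cP2 [bs2 [-> [dP2 [-> dQ2]]]]]]]]] dAB dAB'.
pose sum_rect T (f1 : 'I_n1 -> T) (f2 : 'I_n2 -> T) k :=
  match k with inl i => f1 i | inr j => f2 j end.
have cover (F : 'I_n1 + 'I_n2 -> set (X * nat)) :
    \bigcup_(i in [set: 'I_n1]) F (inl i) `|` \bigcup_(j in [set: 'I_n2]) F (inr j) =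
    \bigcup_(k in [set: 'I_n1 + 'I_n2]) F k.
  apply/seteqP; split=> [p [[i _ Fp]|[j _ Fp]]|p [[i|j] _ Fp]];
    by [exists (inl i) | exists (inr j) | left; exists i | right; exists j].
have disjoint (F : 'I_n1 + 'I_n2 -> set (X * nat)) :
    (forall i i', i != i' -> F (inl i) `&` F (inl i') = set0) ->
    (forall j j', j != j' -> F (inr j) `&` F (inr j') = set0) ->
    \bigcup_(i in [set: 'I_n1]) F (inl i) `&` \bigcup_(j in [set: 'I_n2]) F (inr j) = set0 ->
    forall k l, k != l -> F k `&` F l = set0.
  move=> dl dr dlr [i|j] [i'|j'] kl.
  - by apply: dl; apply: contra kl => /eqP ->.
  - by apply/seteqP; split=> // p [Fp Fp']; rewrite -dlr; split; [exists i|exists j'].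
  - by apply/seteqP; split=> // p [Fp Fp']; rewrite -dlr; split; [exists i'|exists j].
  - by apply: dr; apply: contra kl => /eqP ->.
apply: (@equidec_fin _ (sum_rect _ P1 P2) (sum_rect _ g1 g2) (sum_rect _ s1 s2)).
- by case.
- by case.
- exact: (cover (sum_rect _ P1 P2)).
- exact: (disjoint (sum_rect _ P1 P2)).
- exact: (cover (fun k => act (sum_rect _ g1 g2 k) (sum_rect _ s1 s2 k) (sum_rect _ P1 P2 k))).
- exact: (disjoint (fun k => act (sum_rect _ g1 g2 k) (sum_rect _ s1 s2 k) (sum_rect _ P1 P2 k))).
Qed.

Lemma fiber_size_act P g s N x : bijective s ->
  bounded_by P N -> bounded_by (act g s P) N ->
  fiber_size (act g s P) N x = fiber_size P N (alpha (inv g) x).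
Proof.
move=> /bij_inj s_inj bP bQ; apply: (fiber_size_image s_inj bP bQ) => m; split.
  by move=> [[y n] Pyn [<- <-]]; exists n; rewrite ?alphaK.
by move=> [n Pn <-]; exists (alpha (inv g) x, n); rewrite //= alphaVK.
Qed.

Lemma equidec_fiber_size A B N : clopen A -> clopen B ->
  bounded_by A N -> bounded_by B N ->
  (forall x, fiber_size A N x = fiber_size B N x) -> equidec A B.
Proof.
move=> cA cB bA bB eAB.
(* piece (n, m): the points (x, n) of A such that (x, m) is the point of B of the same
   rank in its fiber; it is moved by the transposition of n and m *)
pose matched (nm : 'I_N * 'I_N) x := [&& `[< A (x, val nm.1) >], `[< B (x, val nm.2) >] &
  fiber_size A nm.1 x == fiber_size B nm.2 x].
pose P (nm : 'I_N * 'I_N) := [set q : X * nat | (q.2 == nm.1) && matched nm q.1].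
pose s (nm : 'I_N * 'I_N) := swapn nm.1 nm.2.
have PE nm : act one (s nm) (P nm) = [set q : X * nat | (q.2 == nm.2) && matched nm q.1].
  apply/seteqP; split=> [_ [[x n] /andP[/eqP /= -> Mx] <-]|[x m] /andP[/eqP /= -> Mx]].
    by rewrite /= alpha1 /s swapnL eqxx.
  by exists (x, val nm.1); [rewrite /P /= eqxx | rewrite /= alpha1 /s swapnL].
have matchedP n m x : matched (n, m) x ->
    [/\ A (x, val n), B (x, val m) & fiber_size A n x = fiber_size B m x].
  by move=> /and3P[/asboolP ? /asboolP ? /eqP].
have sliceA := proj1 (clopen_sliceP A) cA; have sliceB := proj1 (clopen_sliceP B) cB.
apply: (@equidec_fin _ P (fun=> one) s).
- move=> nm; apply/clopen_sliceP => k; under eq_fun do rewrite asboolb.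
  apply: (locally_constant2 andb (locally_constant_cst _)).
  apply: (locally_constant2 andb (sliceA nm.1)); apply: (locally_constant2 andb (sliceB nm.2)).
  exact: (locally_constant2 eqn
    (locally_constant_fiber_size _ cA) (locally_constant_fiber_size _ cB)).
- by move=> nm; exists (s nm); exact: swapnK.
- apply/seteqP; split=> [[x n] Axn|[x n] [nm _ /andP[/eqP /= -> /matchedP[]]]] //.
  have nN := bA _ _ Axn; have := fiber_size_lt Axn nN.
  rewrite eAB => /fiber_size_rank[m [mN Bxm e]].
  exists (Ordinal nN, Ordinal mN) => //.
  by rewrite /P /matched /= (asboolT Axn) (asboolT Bxm) e !eqxx.
- move=> [n m] [n' m'] /negP nm_neq; apply/seteqP; split=> // -[x k] [].
  move=> /andP[/eqP /= kn /matchedP[_ Bxm e]] /andP[/eqP /= kn' /matchedP[_ Bxm' e']].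
  have nn' : n = n' by apply: ord_inj; rewrite -kn -kn'.
  apply: nm_neq; rewrite xpair_eqE nn' eqxx /=; apply/eqP/ord_inj.
  by apply: (fiber_size_inj Bxm Bxm'); rewrite -e -e' nn'.
- rewrite (eq_bigcupr (fun nm _ => PE nm)).
  apply/seteqP; split=> [[x m] Bxm|[x m] [nm _ /andP[/eqP /= -> /matchedP[]]]] //.
  have mN := bB _ _ Bxm; have := fiber_size_lt Bxm mN.
  rewrite -eAB => /fiber_size_rank[n [nN Axn e]].
  exists (Ordinal nN, Ordinal mN) => //.
  by rewrite /matched /= (asboolT Axn) (asboolT Bxm) e !eqxx.
- move=> [n m] [n' m'] /negP nm_neq; rewrite !PE; apply/seteqP; split=> // -[x k] [].
  move=> /andP[/eqP /= km /matchedP[Axn _ e]] /andP[/eqP /= km' /matchedP[Axn' _ e']].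
  have mm' : m = m' by apply: ord_inj; rewrite -km -km'.
  apply: nm_neq; rewrite xpair_eqE mm' eqxx andbT; apply/eqP/ord_inj.
  by apply: (fiber_size_inj Axn Axn'); rewrite e e' mm'.
Qed.

Local Notation coboundary := (coboundary alpha).

Lemma coboundary_sum (I : Type) (r : seq I) (F : I -> X -> int) :
  (forall i, coboundary (F i)) -> coboundary (fun x => \sum_(i <- r) F i x)%R.
Proof.
move=> cF; elim: r => [|i r IH]; first by under eq_fun do rewrite big_nil; exact: cob_zero.
by under eq_fun do rewrite big_cons; exact: cob_add.
Qed.

Lemma coboundary_sub (f h : X -> int) :
  coboundary f -> coboundary h -> coboundary (fun x => f x - h x)%R.
Proof. by move=> cf ch; apply: cob_add => //; exact: cob_opp. Qed.

Lemma coboundary_fiber_size P N g : clopen P ->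
  coboundary (fun x => Posz (fiber_size P N x) - Posz (fiber_size P N (alpha g x)))%R.
Proof.
move=> cP; apply: cob_gen; apply/contZ_locally_constantP.
exact: locally_constant_comp (locally_constant_fiber_size N cP).
Qed.

Lemma equidec_coboundary A B N : equidec A B -> bounded_by A N -> bounded_by B N ->
  coboundary (fun x => fiber_count A N x - fiber_count B N x)%R.
Proof.
move=> [n [P [g [s [cP [bs [eA [dP [eB dQ]]]]]]]]] bA bB.
have bP i : bounded_by (P i) N by move=> x m Pm; apply: (bA x); rewrite eA; exists i.
have bQ i : bounded_by (act (g i) (s i) (P i)) N.
  by move=> x m Qm; apply: (bB x); rewrite eB; exists i.
apply: (@eq_ind _ _ coboundary (coboundary_sum (index_enum 'I_n)
  (fun i => coboundary_fiber_size N (inv (g i)) (cP i)))).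
apply: funext => x; rewrite !fiber_countE (fiber_size_bigcup N x eA dP).
rewrite (fiber_size_bigcup N x eB dQ) sumrB !(big_morph Posz PoszD (erefl (Posz 0))).
by congr (_ - _)%R; apply: eq_bigr => i _; rewrite fiber_size_act.
Qed.

Lemma pi_injective_cancellative : pi_injective alpha -> T_cancellative alpha.
Proof.
move=> inj A B C A1 B1 A2 C2 cA cB cC cA1 cB1 cA2 cC2 eAA1 eBB1 AB1 eAA2 eCC2 AC2 eU.
apply: inj => //.
case: cA cB cC cA1 cB1 cA2 cC2 => _ [nA bA] [_ [nB bB]] [_ [nC bC]] [_ [nA1 bA1]]
  [_ [nB1 bB1]] [_ [nA2 bA2]] [_ [nC2 bC2]].
pose N := (nA + nB + nC + nA1 + nB1 + nA2 + nC2)%N.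
have {}bA : bounded_by A N by apply: bounded_by_leq bA _; rewrite /N; lia.
have {}bB : bounded_by B N by apply: bounded_by_leq bB _; rewrite /N; lia.
have {}bC : bounded_by C N by apply: bounded_by_leq bC _; rewrite /N; lia.
have {}bA1 : bounded_by A1 N by apply: bounded_by_leq bA1 _; rewrite /N; lia.
have {}bB1 : bounded_by B1 N by apply: bounded_by_leq bB1 _; rewrite /N; lia.
have {}bA2 : bounded_by A2 N by apply: bounded_by_leq bA2 _; rewrite /N; lia.
have {}bC2 : bounded_by C2 N by apply: bounded_by_leq bC2 _; rewrite /N; lia.
exists N; split=> //.
(* [B] - [C] = ([B] - [B1]) - ([C] - [C2]) + ([A1 + B1] - [A2 + C2])
               + ([A] - [A1]) - ([A] - [A2]) *)
have cBC := cob_add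
  (cob_add (coboundary_sub (equidec_coboundary eBB1 bB bB1) (equidec_coboundary eCC2 bC bC2))
           (equidec_coboundary eU (bounded_by_setU bA1 bB1) (bounded_by_setU bA2 bC2)))
  (coboundary_sub (equidec_coboundary eAA1 bA bA1) (equidec_coboundary eAA2 bA bA2)).
apply: (@eq_ind _ _ coboundary cBC); apply: funext => x.
by rewrite !fiber_countE !fiber_size_setU // !PoszD; ring.
Qed.

Lemma coboundary_decomposition h : coboundary h ->
  exists L : seq ((X -> nat) * G), List.Forall (fun q => locally_constant q.1) L /\
    forall x, h x = (Posz (\sum_(q <- L) q.1 x) - Posz (\sum_(q <- L) q.1 (alpha q.2 x)))%R.
Proof.
elim=> [f g /contZ_locally_constantP lf| |f f' _ [L [lL eL]] _ [L' [lL' eL']]|f _ [L [lL eL]]].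
- pose pos (z : int) := if z is Posz n then n else 0%N.
  pose neg (z : int) := if z is Negz n then n.+1 else 0%N.
  have posB z : z = (Posz (pos z) - Posz (neg z))%R.
    by case: z => n; rewrite /= ?subr0 // NegzE sub0r.
  (* f - f o alpha g = (f+ - f+ o alpha g) + (h - h o alpha g^-1) with h = f- o alpha g *)
  exists [:: (pos \o f, g); (neg \o f \o alpha g, inv g)]; split.
    apply: List.Forall_cons; first exact: locally_constant_comp.
    apply: List.Forall_cons => //; apply: locally_constant_continuous_comp.
      exact: continuous_alpha.
    exact: locally_constant_comp.
  move=> x; rewrite !big_cons !big_nil /= alphaVK !addn0 !PoszD.
  by rewrite {1}(posB (f x)) {1}(posB (f (alpha g x))); ring.
- by exists [::]; split=> // x; rewrite !big_nil.
- exists (L ++ L'); split; first exact/List.Forall_app.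
  by move=> x; rewrite !big_cat eL eL' !PoszD /=; ring.
- exists [seq (q.1 \o alpha q.2, inv q.2) | q <- L]; split.
    apply/List.Forall_map; apply: List.Forall_impl lL => q lq /=.
    exact: (locally_constant_continuous_comp (@continuous_alpha q.2) lq).
  move=> x; rewrite eL !big_map /= opprB.
  by congr (Posz _ - Posz _)%R; apply: eq_bigr => q _; rewrite alphaVK.
Qed.

Lemma equidec_stair k p g : locally_constant p ->
  equidec (stair k p) (stair k (p \o alpha g)).
Proof.
move=> lp; have -> : stair k (p \o alpha g) = act (inv g) id (stair k p).
  apply/seteqP; split=> [[x n] /= xn|_ [[y n] /= yn <-]] /=.
    by exists (alpha g x, n); rewrite //= alphaK.
  by rewrite /stair /= alphaVK.
by apply: equidec_act; [exact: clopen_stair | exists id].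
Qed.

Lemma equidec_stack k M L :
  List.Forall (fun q => locally_constant q.1 /\ forall x, (q.1 x <= M)%N) L ->
  equidec (stack k M [seq q.1 | q <- L]) (stack k M [seq q.1 \o alpha q.2 | q <- L]).
Proof.
elim: L k => [k _|[p g] L IH k /List.Forall_cons_iff [[/= lp pM] LM]] /=.
  exact/equidec_refl/clopen0.
apply: equidec_setU; [exact: equidec_stair | exact: IH | exact: stair_stack_disjoint |].
by apply: stair_stack_disjoint => x; exact: pM.
Qed.

Lemma cancellative_pi_injective : compact [set: X] ->
  T_cancellative alpha -> pi_injective alpha.
Proof.
move=> cX canc A B [cA _] [cB _] [N [bA bB /coboundary_decomposition [L [lL eL]]]].
have [M LM] := Forall_locally_constant_bounded cX lL.
pose S1 := stack N M [seq q.1 | q <- L].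
pose S2 := stack N M [seq q.1 \o alpha q.2 | q <- L].
pose K := (N + size L * M)%N.
have S1M : List.Forall (fun p => forall x, (p x <= M)%N) [seq q.1 | q <- L].
  exact/List.Forall_map.
have S2M : List.Forall (fun p => forall x, (p x <= M)%N) [seq q.1 \o alpha q.2 | q <- L].
  by apply/List.Forall_map; apply: List.Forall_impl LM => q qM x; exact: qM.
have cS1 : clopen S1 by exact/clopen_stack/List.Forall_map.
have cS2 : clopen S2.
  apply/clopen_stack/List.Forall_map; apply: List.Forall_impl lL => q lq.
  exact: (locally_constant_continuous_comp (@continuous_alpha q.2) lq).
have bS1 : bounded_by S1 K by have := stack_bounded S1M (k := N); rewrite size_map.
have bS2 : bounded_by S2 K by have := stack_bounded S2M (k := N); rewrite size_map.
have NK : (N <= K)%N by exact: leq_addr.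
have bAK := bounded_by_leq bA NK; have bBK := bounded_by_leq bB NK.
have bclopenK (D : set (X * nat)) : clopen D -> bounded_by D K -> bclopen D by split=> //; exists K.
apply: (canc S1 A B S2 A S1 B); try by [apply: bclopenK | apply: equidec_refl].
- exact/equidec_stack/List.Forall_and.
- exact: stack_disjoint bA.
- exact: stack_disjoint bB.
apply: (equidec_fiber_size (clopenU cS2 cA) (clopenU cS1 cB)
  (bounded_by_setU bS2 bAK) (bounded_by_setU bS1 bBK)) => x.
rewrite !fiber_size_setU ?(stack_disjoint _ _ bA) ?(stack_disjoint _ _ bB) //.
rewrite (fiber_size_stack S1M) ?(fiber_size_stack S2M) ?size_map // !big_map.
rewrite (fiber_size_widen _ bA NK) (fiber_size_widen _ bB NK).
have -> : \sum_(q <- L) (q.1 \o alpha q.2) x = \sum_(q <- L) q.1 (alpha q.2 x) by [].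
by have := eL x; rewrite !fiber_countE; lia.
Qed.

End Action.

Theorem mainTheorem10 (G : countType) (mul : G -> G -> G) (one : G) (inv : G -> G)
  (X : topologicalType) (alpha : G -> X -> X) :
  is_group mul one inv ->
  compact [set: X] -> hausdorff_space X -> zero_dim X ->
  is_action mul one alpha ->
  (pi_injective alpha <-> T_cancellative alpha).
Proof.
move=> group_G cX _ _ action_alpha; split.
  exact: pi_injective_cancellative group_G action_alpha.
exact: cancellative_pi_injective group_G action_alpha cX.
Qed.
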